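(* Consider the two-link parallel network with unit demand and latencies $\ell_1(x_1)=x_1^2$ and $\ell_2(x_2)=0$. Then there is no uncapped subgame perfect Nash equilibrium, i.e. $\mathcal{T}(\infty)=\emptyset$, and moreover $\mathcal{T}(c)=\emptyset$ for every price cap $c\ge\frac12$.
   Context: Flows $x\in\mathbb{R}^2_+$ with $x_1+x_2=1$. For tolls $t\in\mathbb{R}^2_+$, $x(t)$ is the unique Wardrop equilibrium for $t$ (for all $i,j$ with $x_i>0$: $\ell_i(x_i)+t_i\le\ell_j(x_j)+t_j$). Profit $\Pi_i(t)=t_ix_i(t)$. For $c\in\mathbb{R}_+$, $\mathcal{T}(c)$ is the set of toll vectors with $0\le t_i\le c$ such that for every $i$ and every $t'_i\in[0,c]$, $\Pi_i(t_i,t_{-i})\ge\Pi_i(t'_i,t_{-i})$ (flow recomputed); $\mathcal{T}(\infty)$ is the same without upper bound. *)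

From Stdlib Require Import Reals Lra.
Open Scope R_scope.

Definition lat1 (y : R) : R := y ^ 2.
Definition lat2 (y : R) : R := 0.

(* Wardrop equilibrium for tolls t: x in R^2_+, x1 + x2 = 1, and every
   used link has minimal latency-plus-toll (cases i = j are trivial). *)
Definition wardrop (t x : R * R) : Prop :=
  0 <= fst x /\ 0 <= snd x /\ fst x + snd x = 1 /\
  (0 < fst x -> lat1 (fst x) + fst t <= lat2 (snd x) + snd t) /\
  (0 < snd x -> lat2 (snd x) + snd t <= lat1 (fst x) + fst t).

Definition profit1 (xf : R * R -> R * R) (t : R * R) : R := fst t * fst (xf t).
Definition profit2 (xf : R * R -> R * R) (t : R * R) : R := snd t * snd (xf t).

Definition capped (c : R) (s : R) : Prop := 0 <= s <= c.
Definition uncapped (s : R) : Prop := 0 <= s.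

Definition in_T (xf : R * R -> R * R) (adm : R -> Prop) (t : R * R) : Prop :=
  adm (fst t) /\ adm (snd t) /\
  (forall t1', adm t1' -> profit1 xf (t1', snd t) <= profit1 xf t) /\
  (forall t2', adm t2' -> profit2 xf (fst t, t2') <= profit2 xf t).

(* In an equilibrium (t1, t2) both firms must earn a positive profit, and firm 2
   must not gain by undercutting firm 1 (taking the whole demand at a toll just
   below t1); this forces an interior flow x on link 1 with t2 = t1 + x^2 and
   t2 <= x.  Firm 1 lowering its toll until it carries 2x/3 then shows x < 1/2,
   and firm 2 raising its toll to t1 + 1/4, which splits the demand evenly, is
   then a profitable deviation.  All deviations used lie in [0, 1/2] or below a
   current toll, so the argument covers every downward closed set of admissible
   tolls containing 1/2. *)

From Stdlib Require Import Reals Lra Psatz.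
Open Scope R_scope.

Lemma wardrop_fst_zero (t x : R * R) :
  wardrop t x -> snd t < fst t -> fst x = 0.
Proof.
  unfold wardrop, lat1, lat2; intros (x1_ge0 & _ & _ & opt1 & _) lt_t.
  destruct (Rle_lt_dec (fst x) 0) as [x1_le0 | x1_gt0]; [lra |].
  specialize (opt1 x1_gt0); nra.
Qed.

Lemma wardrop_fst_pos (t x : R * R) :
  wardrop t x -> fst t < snd t -> 0 < fst x.
Proof.
  unfold wardrop, lat1, lat2; intros (x1_ge0 & x2_ge0 & sum1 & _ & opt2) lt_t.
  destruct (Rle_lt_dec (fst x) 0) as [x1_le0 | x1_gt0]; [| lra].
  specialize (opt2 ltac:(lra)); nra.
Qed.

Lemma wardrop_snd_pos (t x : R * R) :
  wardrop t x -> snd t < fst t + 1 -> 0 < snd x.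
Proof.
  unfold wardrop, lat1, lat2; intros (x1_ge0 & x2_ge0 & sum1 & opt1 & _) lt_t.
  destruct (Rle_lt_dec (snd x) 0) as [x2_le0 | x2_gt0]; [| lra].
  assert (x1_eq1 : fst x = 1) by lra.
  specialize (opt1 ltac:(lra)); rewrite x1_eq1 in opt1; lra.
Qed.

Lemma wardrop_interior (t x : R * R) :
  wardrop t x -> 0 < fst x -> 0 < snd x -> snd t = fst t + fst x ^ 2.
Proof.
  unfold wardrop, lat1, lat2; intros (_ & _ & _ & opt1 & opt2) x1_gt0 x2_gt0.
  specialize (opt1 x1_gt0); specialize (opt2 x2_gt0); lra.
Qed.

Lemma wardrop_fst_eq (t x : R * R) (y : R) :
  wardrop t x -> 0 < y < 1 -> snd t = fst t + y ^ 2 -> fst x = y.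
Proof.
  intros W y_bounds t_eq.
  assert (x1_gt0 : 0 < fst x) by (apply (wardrop_fst_pos t); [exact W | nra]).
  assert (x2_gt0 : 0 < snd x) by (apply (wardrop_snd_pos t); [exact W | nra]).
  pose proof (wardrop_interior t x W x1_gt0 x2_gt0) as sq_eq.
  assert ((fst x - y) * (fst x + y) = 0) by nra.
  nra.
Qed.

Lemma wardrop_snd (t x : R * R) : wardrop t x -> snd x = 1 - fst x.
Proof. unfold wardrop; lra. Qed.

Section Equilibrium.

Variable xf : R * R -> R * R.
Hypothesis xf_wardrop :
  forall t : R * R, 0 <= fst t -> 0 <= snd t -> wardrop t (xf t).

Variable adm : R -> Prop.
Hypothesis adm_ge0 : forall s, adm s -> 0 <= s.
Hypothesis adm_downward : forall s u, 0 <= s <= u -> adm u -> adm s.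
Hypothesis adm_half : adm (1 / 2).

Variables t1 t2 : R.
Hypothesis equilibrium : in_T xf adm (t1, t2).

Lemma tolls_ge0 : 0 <= t1 /\ 0 <= t2.
Proof. destruct equilibrium as (adm1 & adm2 & _); split; apply adm_ge0; assumption. Qed.

Lemma best_response1 (s : R) :
  adm s -> s * fst (xf (s, t2)) <= t1 * fst (xf (t1, t2)).
Proof. destruct equilibrium as (_ & _ & best1 & _); apply best1. Qed.

Lemma best_response2 (s : R) :
  adm s -> s * snd (xf (t1, s)) <= t2 * snd (xf (t1, t2)).
Proof. destruct equilibrium as (_ & _ & _ & best2); apply best2. Qed.

Lemma flow_wardrop (s1 s2 : R) :
  0 <= s1 -> 0 <= s2 -> wardrop (s1, s2) (xf (s1, s2)).
Proof. intros; apply xf_wardrop; assumption. Qed.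

Lemma toll2_gt0 : 0 < t2.
Proof.
  destruct tolls_ge0 as [t1_ge0 t2_ge0].
  destruct (Rle_lt_dec t2 0) as [t2_le0 | t2_gt0]; [exfalso | exact t2_gt0].
  pose proof (flow_wardrop t1 (1 / 2) t1_ge0 ltac:(lra)) as W.
  assert (flow_gt0 : 0 < snd (xf (t1, 1 / 2))) by
    (apply (wardrop_snd_pos _ _ W); simpl; lra).
  pose proof (best_response2 _ adm_half) as best.
  replace t2 with 0 in best by lra; lra.
Qed.

Lemma toll1_flow1_gt0 : 0 < t1 /\ 0 < fst (xf (t1, t2)).
Proof.
  destruct tolls_ge0 as [t1_ge0 t2_ge0]; pose proof toll2_gt0 as t2_gt0.
  pose proof (flow_wardrop t1 t2 t1_ge0 t2_ge0) as W.
  assert (x1_ge0 : 0 <= fst (xf (t1, t2))) by apply (proj1 W).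
  pose proof (flow_wardrop (t2 / 2) t2 ltac:(lra) t2_ge0) as W'.
  assert (flow_gt0 : 0 < fst (xf (t2 / 2, t2))) by
    (apply (wardrop_fst_pos _ _ W'); simpl; lra).
  pose proof (best_response1 (t2 / 2)
                (adm_downward (t2 / 2) t2 ltac:(lra) (proj1 (proj2 equilibrium))))
    as best.
  assert (profit_gt0 : 0 < t1 * fst (xf (t1, t2))) by nra.
  split; nra.
Qed.

(* Any toll strictly below t1 diverts the whole demand to link 2. *)
Lemma toll1_le_profit2 : t1 <= t2 * (1 - fst (xf (t1, t2))).
Proof.
  destruct tolls_ge0 as [t1_ge0 t2_ge0].
  rewrite <- (wardrop_snd _ _ (flow_wardrop t1 t2 t1_ge0 t2_ge0)).
  set (profit := t2 * snd (xf (t1, t2))).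
  assert (profit_ge0 : 0 <= profit) by
    (apply Rmult_le_pos;
     [exact t2_ge0 | apply (proj1 (proj2 (flow_wardrop t1 t2 t1_ge0 t2_ge0)))]).
  destruct (Rle_lt_dec t1 profit) as [le_t1 | lt_profit]; [exact le_t1 | exfalso].
  set (p := (profit + t1) / 2).
  pose proof (flow_wardrop t1 p t1_ge0 ltac:(unfold p; lra)) as W.
  assert (x1_eq0 : fst (xf (t1, p)) = 0) by
    (apply (wardrop_fst_zero _ _ W); simpl; unfold p; lra).
  pose proof (best_response2 p
                (adm_downward p t1 ltac:(unfold p; lra) (proj1 equilibrium)))
    as best.
  rewrite (wardrop_snd _ _ W), x1_eq0 in best; fold profit in best.
  unfold p in best; lra.
Qed.

Lemma toll2_eq : t2 = t1 + fst (xf (t1, t2)) ^ 2.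
Proof.
  destruct tolls_ge0 as [t1_ge0 t2_ge0].
  destruct toll1_flow1_gt0 as [t1_gt0 x1_gt0].
  pose proof (flow_wardrop t1 t2 t1_ge0 t2_ge0) as W.
  apply (wardrop_interior _ _ W x1_gt0).
  rewrite (wardrop_snd _ _ W); pose proof toll1_le_profit2; nra.
Qed.

Lemma toll2_le_flow1 : t2 <= fst (xf (t1, t2)).
Proof.
  destruct toll1_flow1_gt0 as [t1_gt0 x1_gt0].
  pose proof toll1_le_profit2 as undercut; pose proof toll2_eq as t2_eq.
  set (x := fst (xf (t1, t2))) in *.
  assert (t1 * x <= x ^ 2 * (1 - x)) by (rewrite t2_eq in undercut; nra).
  nra.
Qed.

(* Firm 1 gives up a third of its flow: it would gain unless x <= 9/19. *)
Lemma flow1_lt_half : fst (xf (t1, t2)) < 1 / 2.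
Proof.
  destruct tolls_ge0 as [t1_ge0 t2_ge0].
  destruct toll1_flow1_gt0 as [t1_gt0 x1_gt0].
  pose proof toll2_eq as t2_eq; pose proof toll2_le_flow1 as t2_le.
  set (x := fst (xf (t1, t2))) in *.
  set (s := 2 * x / 3); set (t1' := t2 - s ^ 2).
  assert (t1'_bounds : 0 <= t1' <= t2) by (unfold t1', s; nra).
  pose proof (flow_wardrop t1' t2 (proj1 t1'_bounds) t2_ge0) as W.
  assert (x1'_eq : fst (xf (t1', t2)) = s) by
    (apply (wardrop_fst_eq _ _ _ W); simpl; unfold t1', s; nra).
  pose proof (best_response1 t1'
                (adm_downward t1' t2 t1'_bounds (proj1 (proj2 equilibrium))))
    as best.
  rewrite x1'_eq in best; fold x in best; unfold t1', s in best.
  assert (19 * x ^ 2 <= 9 * t2) by nra.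
  nra.
Qed.

(* Firm 2 raises its toll to t1 + 1/4, which splits the demand evenly. *)
Lemma equilibrium_absurd : False.
Proof.
  destruct tolls_ge0 as [t1_ge0 t2_ge0].
  pose proof toll2_eq as t2_eq; pose proof toll2_le_flow1 as t2_le.
  pose proof flow1_lt_half as x1_lt.
  pose proof (wardrop_snd _ _ (flow_wardrop t1 t2 t1_ge0 t2_ge0)) as x2_eq.
  set (x := fst (xf (t1, t2))) in *.
  set (p := t1 + 1 / 4).
  assert (p_bounds : 0 <= p <= 1 / 2) by (unfold p; nra).
  pose proof (flow_wardrop t1 p t1_ge0 (proj1 p_bounds)) as W.
  assert (x1'_eq : fst (xf (t1, p)) = 1 / 2) by
    (apply (wardrop_fst_eq _ _ _ W); simpl; unfold p; lra).
  pose proof (best_response2 p (adm_downward p (1 / 2) p_bounds adm_half)) as best.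
  rewrite (wardrop_snd _ _ W), x1'_eq, x2_eq in best; fold x in best.
  assert ((x - x ^ 2 - t1) * (1 / 2 - x) >= 0) by nra.
  unfold p in best; nra.
Qed.

End Equilibrium.

Lemma in_T_empty (xf : R * R -> R * R) (adm : R -> Prop) :
  (forall t : R * R, 0 <= fst t -> 0 <= snd t -> wardrop t (xf t)) ->
  (forall s, adm s -> 0 <= s) ->
  (forall s u, 0 <= s <= u -> adm u -> adm s) ->
  adm (1 / 2) ->
  forall t : R * R, ~ in_T xf adm t.
Proof.
  intros xf_wardrop adm_ge0 adm_downward adm_half [t1 t2] equilibrium.
  exact (equilibrium_absurd xf xf_wardrop adm adm_ge0 adm_downward adm_half
           t1 t2 equilibrium).
Qed.

Theorem mainTheorem15 :
  forall xf : R * R -> R * R,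
    (forall t : R * R, 0 <= fst t -> 0 <= snd t -> wardrop t (xf t)) ->
    (forall t : R * R, ~ in_T xf uncapped t) /\
    (forall c : R, 1 / 2 <= c -> forall t : R * R, ~ in_T xf (capped c) t).
Proof.
  intros xf xf_wardrop; split.
  - apply in_T_empty; [exact xf_wardrop | unfold uncapped; intros; lra ..].
  - intros c c_ge.
    apply in_T_empty; [exact xf_wardrop | unfold capped; intros; lra ..].
Qed.
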